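(* Let $m\ge1$ and $k\ge 1$ be integers, and let $q_k=\lfloor mk/(m+1)\rfloor$. There are unique real numbers $a_{k,0,m}$ and $a_{k,l,r}$ ($1\le l\le q_k$, $0\le r\le m$) such that, in $\mathbb{R}[x]$, $$\big((x-1)^{\underline m}\big)^k=a_{k,0,m}(x-1)^{\underline m}+\sum_{l=1}^{q_k}\sum_{r=0}^m a_{k,l,r}\big((x)^{\underline{m+1}}\big)^l(x+r-m-1)^{\underline r}.$$
   Context: Falling factorials are $(y)^{\underline 0}=1$ and $(y)^{\underline j}=y(y-1)\cdots(y-j+1)$ for $j\ge 1$. *)

From HB Require Import structures.
From mathcomp Require Import all_boot all_order all_algebra.
From mathcomp Require Import reals.
Set Implicit Arguments. Unset Strict Implicit. Unset Printing Implicit Defensive.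
Import Order.TTheory GRing.Theory Num.Theory.
Local Open Scope ring_scope.

Definition ffall (R : nzRingType) (y : {poly R}) (j : nat) : {poly R} :=
  \prod_(i < j) (y - (i%:R)%:P).

Definition rhs6p1 (R : nzRingType) (m k : nat) (a0 : R) (a : nat -> nat -> R)
  : {poly R} :=
  a0 *: ffall ('X - 1) m
  + \sum_(1 <= l < ((m * k) %/ m.+1).+1) \sum_(0 <= r < m.+1)
      a l r *: (ffall 'X m.+1 ^+ l * ffall ('X + (r%:R - (m.+1)%:R)%:P) r).

From HB Require Import structures.
From mathcomp Require Import all_boot all_order all_algebra.
From mathcomp Require Import reals.
From mathcomp Require Import zify ring.
Import Order.TTheory GRing.Theory Num.Theory.
Local Open Scope ring_scope.

(* Let E = (x-1)^{\underline m} and F = (x)^{\underline{m+1}} = x E.  The products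
   F^j (x+r-m-1)^{\underline r} with 0 <= r <= m are monic of degree j(m+1)+r, hence form a
   triangular basis, and the right-hand side is a_{k,0,m} E + F T where T has coordinates
   a_{k,l,r} in this basis.  Existence: E^k - E(0)^{k-1} E = E (E^{k-1} - E(0)^{k-1}) is
   divisible by x E = F, with a quotient of degree at most m(k-1) < q_k (m+1).  Uniqueness:
   evaluating at 0 kills F but not E, which fixes a_{k,0,m}; then cancel F and use
   triangularity. *)

Section MonicBasis.
Variables (R : nzRingType) (B : nat -> {poly R}).
Hypotheses (B_monic : forall n, B n \is monic) (size_B : forall n, size (B n) = n.+1).

Lemma coef_monic_basis_high n i : (n < i)%N -> (B n)`_i = 0.
Proof. by move=> lt_ni; apply/leq_sizeP: lt_ni; rewrite size_B. Qed.

Lemma coef_monic_basis_lead n : (B n)`_n = 1.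
Proof. by have := monicP (B_monic n); rewrite /lead_coef size_B. Qed.

Lemma monic_basis_span N (p : {poly R}) : (size p <= N)%N ->
  exists c : nat -> R, p = \sum_(n < N) c n *: B n.
Proof.
elim: N p => [|N IH] p size_p.
  by exists (fun=> 0); rewrite big_ord0; apply/eqP; rewrite -size_poly_eq0 -leqn0.
have [|c def_c] := IH (p - p`_N *: B N).
  apply/leq_sizeP => j le_Nj; rewrite coefB coefZ.
  case: ltngtP le_Nj => // [lt_Nj|<-] _; last by rewrite coef_monic_basis_lead mulr1 subrr.
  by rewrite coef_monic_basis_high // (leq_sizeP _ _ size_p) // mulr0 subr0.
exists (fun n => if (n < N)%N then c n else p`_N).
rewrite big_ord_recr /= ltnn.
under eq_bigr => i _ do rewrite ltn_ord.
by rewrite -def_c subrK.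
Qed.

Lemma monic_basis_free N (c : nat -> R) : \sum_(n < N) c n *: B n = 0 ->
  forall n, (n < N)%N -> c n = 0.
Proof.
elim: N c => [|N IH] c sum_c0 n // lt_nN1.
have cN0 : c N = 0.
  have := congr1 (coefp N) sum_c0.
  rewrite /= big_ord_recr /= coefD coefZ coef_monic_basis_lead mulr1 coef_sum coef0.
  by rewrite big1 ?add0r // => i _; rewrite coefZ coef_monic_basis_high ?mulr0.
move: sum_c0; rewrite big_ord_recr /= cN0 scale0r addr0 => /IH c_eq0.
by move: lt_nN1; rewrite ltnS leq_eqVlt => /predU1P[-> // | /c_eq0].
Qed.

End MonicBasis.

Lemma sum_ord_mul_split (V : nmodType) (f : nat -> V) q M :
  \sum_(n < q * M) f n = \sum_(1 <= l < q.+1) \sum_(0 <= r < M) f (l.-1 * M + r)%N.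
Proof.
elim: q => [|q IH]; first by rewrite mul0n big_ord0 big_geq.
rewrite big_nat_recr //= -IH -!(big_mkord xpredT) mulSn addnC.
rewrite (big_cat_nat _ (n := (q * M)%N)) ?leq_addr //=; congr (_ + _).
rewrite -{1}(add0n (q * M)%N) big_addn addKn.
by apply: eq_bigr => i _; rewrite addnC.
Qed.

Lemma ffall_XaddC (R : nzRingType) (c : R) j :
  ffall ('X + c%:P) j = \prod_(i < j) ('X - (i%:R - c)%:P).
Proof. by apply: eq_bigr => i _; rewrite polyCB opprB addrA addrAC. Qed.

Lemma ffall_XaddC_monic (R : nzRingType) (c : R) j : ffall ('X + c%:P) j \is monic.
Proof. by rewrite ffall_XaddC monic_prod_XsubC. Qed.

Lemma size_ffall_XaddC (R : nzRingType) (c : R) j : size (ffall ('X + c%:P) j) = j.+1.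
Proof.
by rewrite ffall_XaddC size_prod_XsubC /index_enum; unlock; rewrite -enumT size_enum_ord.
Qed.

Lemma ffall_X_monic (R : nzRingType) j : ffall ('X : {poly R}) j \is monic.
Proof. by have := ffall_XaddC_monic R 0 j; rewrite addr0. Qed.

Lemma size_ffall_X (R : nzRingType) j : size (ffall ('X : {poly R}) j) = j.+1.
Proof. by have := size_ffall_XaddC R 0 j; rewrite addr0. Qed.

Lemma ffall_XsubS (R : nzRingType) j :
  ffall ('X - 1 : {poly R}) j = \prod_(i < j) ('X - (i.+1)%:R%:P).
Proof. by apply: eq_bigr => i _; rewrite -nat1r polyCD opprD addrA. Qed.

Lemma ffall_X_succ (R : nzRingType) j :
  ffall ('X : {poly R}) j.+1 = 'X * ffall ('X - 1) j.
Proof.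
by rewrite ffall_XsubS /ffall big_ord_recl subr0; congr (_ * _); apply: eq_bigr.
Qed.

Lemma size_ffall_XsubS (R : nzRingType) j : size (ffall ('X - 1 : {poly R}) j) = j.+1.
Proof. by have := size_ffall_XaddC R (-1) j; rewrite polyCN. Qed.

Lemma horner0_ffall_XsubS_neq0 (R : numDomainType) j :
  (ffall ('X - 1 : {poly R}) j).[0] != 0.
Proof.
rewrite ffall_XsubS horner_prod; apply/prodf_neq0 => i _.
by rewrite hornerXsubC sub0r oppr_eq0 pnatr_eq0.
Qed.

Lemma leq_mul_pred_divn m k : (m * k.-1 <= (m * k) %/ m.+1 * m.+1)%N.
Proof.
case: k => [|k] /=; first by rewrite muln0.
by have := divn_eq (m * k.+1) m.+1; have := ltn_pmod (m * k.+1) (ltn0Sn m); rewrite mulnS; lia.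
Qed.

Section FallingFactorialBasis.
Variables (R : numDomainType) (m : nat).

Local Notation E := (ffall ('X - 1 : {poly R}) m).
Local Notation F := (ffall ('X : {poly R}) m.+1).

Definition ffall_basis (n : nat) : {poly R} :=
  F ^+ (n %/ m.+1) * ffall ('X + ((n %% m.+1)%:R - m.+1%:R)%:P) (n %% m.+1).

Lemma ffall_basis_monic n : ffall_basis n \is monic.
Proof. by rewrite monicMl ?monic_exp ?ffall_X_monic ?ffall_XaddC_monic. Qed.

Lemma size_ffall_basis n : size (ffall_basis n) = n.+1.
Proof.
rewrite size_monicM ?monic_exp ?ffall_X_monic ?monic_neq0 ?ffall_XaddC_monic //.
have := size_exp F (n %/ m.+1); rewrite size_ffall_XaddC size_ffall_X /=.
have : (0 < size (F ^+ (n %/ m.+1)))%N.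
  by rewrite size_poly_gt0 monic_neq0 ?monic_exp ?ffall_X_monic.
rewrite mulnC; have := divn_eq n m.+1.
by move: (size _) (n %/ m.+1 * m.+1)%N (n %% m.+1)%N => s d r; lia.
Qed.

Lemma rhs6p1_basis k b0 (b : nat -> nat -> R) :
  rhs6p1 m k b0 b = b0 *: E +
    F * \sum_(n < (m * k) %/ m.+1 * m.+1) b (n %/ m.+1)%N.+1 (n %% m.+1)%N *: ffall_basis n.
Proof.
congr (_ + _); rewrite mulr_sumr (sum_ord_mul_split _
  (fun n => F * (b (n %/ m.+1)%N.+1 (n %% m.+1)%N *: ffall_basis n))).
apply: eq_big_nat => l /andP[l_gt0 _]; apply: eq_big_nat => r /andP[_ lt_rm].
rewrite /ffall_basis divnMDl // modnMDl divn_small // modn_small // addn0 prednK //.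
by rewrite -scalerAr mulrA -exprS prednK.
Qed.

Lemma rhs6p1_onto k a0 (T : {poly R}) : (size T <= (m * k) %/ m.+1 * m.+1)%N ->
  exists a, rhs6p1 m k a0 a = a0 *: E + F * T.
Proof.
move=> /(monic_basis_span _ _ ffall_basis_monic size_ffall_basis) [c ->].
exists (fun l r => c (l.-1 * m.+1 + r)%N); rewrite rhs6p1_basis.
by congr (_ + F * _); apply: eq_bigr => n _; rewrite succnK -divn_eq.
Qed.

Lemma rhs6p1_inj k a0 b0 (a b : nat -> nat -> R) :
  rhs6p1 m k b0 b = rhs6p1 m k a0 a ->
  b0 = a0 /\ forall l r, (1 <= l <= (m * k) %/ m.+1)%N -> (r <= m)%N -> b l r = a l r.
Proof.
rewrite !rhs6p1_basis => eq_rhs.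
have eq_b0 : b0 = a0.
  have := congr1 (horner^~ 0) eq_rhs; rewrite ffall_X_succ !hornerD !hornerZ !hornerM.
  by rewrite hornerX !mul0r !addr0 => /(mulIf (horner0_ffall_XsubS_neq0 _ _)).
split=> // l r /andP[l_gt0 le_lq] le_rm.
move: eq_rhs; rewrite eq_b0 => /addrI /(mulfI (monic_neq0 (ffall_X_monic _ _))) /eqP.
rewrite -subr_eq0 -sumrB; under eq_bigr do rewrite -scalerBl.
move=> /eqP /(monic_basis_free _ _ ffall_basis_monic size_ffall_basis _
  (fun n => b (n %/ m.+1)%N.+1 (n %% m.+1)%N - a (n %/ m.+1)%N.+1 (n %% m.+1)%N)).
have lt_n : (l.-1 * m.+1 + r < (m * k) %/ m.+1 * m.+1)%N.
  have : (l.-1.+1 * m.+1 <= (m * k) %/ m.+1 * m.+1)%N.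
    by rewrite prednK // leq_mul2r le_lq orbT.
  by rewrite mulSn; lia.
move=> /(_ _ lt_n) /eqP; rewrite subr_eq0 divnMDl // modnMDl divn_small ?ltnS //.
by rewrite modn_small ?ltnS // addn0 prednK // => /eqP.
Qed.

Lemma ffall_XsubS_exp_decomp k : (1 <= k)%N ->
  exists T : {poly R}, E ^+ k = E.[0] ^+ k.-1 *: E + F * T /\ (size T <= m * k.-1)%N.
Proof.
move=> k_gt0; set a0 := E.[0] ^+ k.-1.
have /factor_theorem [T] : root (E ^+ k.-1 - a0%:P) 0.
  by rewrite /root hornerD hornerN hornerC horner_exp subrr.
rewrite subr0 => defT; exists T; split.
  move/eqP: defT; rewrite subr_eq => /eqP defT.
  by rewrite -(prednK k_gt0) exprS defT ffall_X_succ -mul_polyC; ring.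
have [-> | T_neq0] := eqVneq T 0; first by rewrite size_poly0.
rewrite -ltnS -(size_mulX T_neq0) -defT.
apply: (leq_trans (size_polyD _ _)); rewrite size_polyN geq_max.
rewrite (leq_trans (size_poly_exp_leq _ _)) ?size_ffall_XsubS //=.
by rewrite (leq_trans (size_polyC_leq1 _)).
Qed.

End FallingFactorialBasis.

Theorem lemma6p1 (R : realType) (m k : nat) (hm : (1 <= m)%N) (hk : (1 <= k)%N) :
  exists (a0 : R) (a : nat -> nat -> R),
    ffall ('X - 1) m ^+ k = rhs6p1 m k a0 a /\
    forall (b0 : R) (b : nat -> nat -> R),
      ffall ('X - 1) m ^+ k = rhs6p1 m k b0 b ->
      b0 = a0 /\
      forall l r, (1 <= l <= (m * k) %/ m.+1)%N -> (r <= m)%N -> b l r = a l r.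
Proof.
have [T [decomp size_T]] := ffall_XsubS_exp_decomp R m k hk.
set a0 := (ffall ('X - 1) m).[0] ^+ k.-1 in decomp.
have [a rhs_a] := rhs6p1_onto R m k a0 T (leq_trans size_T (leq_mul_pred_divn m k)).
exists a0, a; rewrite decomp -rhs_a.
by split=> // b0 b /esym /rhs6p1_inj.
Qed.
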